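(* Fix any quantile vector $\mathbf{q}=(q_1\ge q_2\ge\dots\ge q_N)$ with $q_i\in(0,1)$. Then $\mathrm{STR}(\mathbf{q},\pi)\ge \mathrm{OPT}(\mathbf{q},\pi)$ for every assignment $\pi\in\mathcal{E}_1$. Moreover, with $\pi$ uniformly random from $\Pi_{n,m,c}$, $\mathbb{E}_\pi[\mathrm{STR}(\mathbf{q},\pi)-\mathrm{OPT}(\mathbf{q},\pi)\mid \mathcal{E}_1]\ge \mathbb{E}_{i,j}[b(q_i)-s(q_j)]$, where $i$ is uniform on $I_1$ and $j$ is uniform on $J_1$, independently.
   Context: Setting: distributions $F_B,F_S$ with quantile functions $b(q)=\inf\{x:\Pr_{b\sim F_B}[b\le x]\ge q\}$, $s(q)=\inf\{x:\Pr_{s\sim F_S}[s\le x]\ge q\}$, and $F_B$ first-order stochastically dominates $F_S$, i.e. $b(q)\ge s(q)$ for all $q\in(0,1)$. Integers $m\ge n\ge 20$ (original buyers, original sellers) and $c\ge1$ (new buyers and new sellers); $N=m+n+2c$. $\Pi_{n,m,c}$ is the set of maps $\pi:[N]\to\{\mathrm{BO},\mathrm{BN},\mathrm{SO},\mathrm{SN}\}$ with $|\pi^{-1}(\mathrm{BO})|=m$, $|\pi^{-1}(\mathrm{SO})|=n$, $|\pi^{-1}(\mathrm{BN})|=|\pi^{-1}(\mathrm{SN})|=c$; write $B_{\mathrm{Old}}^\pi=\pi^{-1}(\mathrm{BO})$, $B_{\mathrm{New}}^\pi=\pi^{-1}(\mathrm{BN})$, $S_{\mathrm{Old}}^\pi=\pi^{-1}(\mathrm{SO})$,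 $S_{\mathrm{New}}^\pi=\pi^{-1}(\mathrm{SN})$. Given $\mathbf{q}$ and $\pi$, index $i$ labeled as a buyer is a buyer with value $b(q_i)$ and index labeled as a seller is a seller with value $s(q_i)$; the original market consists of the old buyers and old sellers, the augmented market of all agents. $\mathrm{OPT}(\mathbf{q},\pi)$ is the first-best gains from trade in the original market and $\mathrm{STR}(\mathbf{q},\pi)$ is the gains from trade of Seller Trade Reduction in the augmented market. (First best: with buyer values $b^{(1)}\ge\dots$ and seller values $s^{(1)}\le\dots$, let $r=\max\{i: b^{(i)}\ge s^{(i)}\}$ over $i\le$ min of the side sizes ($r=0$ if none); trade the top $r$ buyers with bottom $r$ sellers, gains $\sum_{i\le r}(b^{(i)}-s^{(i)})$. STR: with $s^{(k)}=\infty$ beyond the number of sellers, if $b^{(r)}\ge s^{(r+1)}$ trade $r$ pairs, else trade only the top $r-1$ buyers with bottom $r-1$ sellers.) Let $p=\lceil n/10\rceil$, $I_1=\{1,\dots,p\}$, $I_2=\{p+1,\dots,2p\}$, $J_1=\{N-p+1,\dots,N\}$, $J_2=\{N-2p+1,\dots,N-p\}$. $\mathcal{E}_1$ is the set of $\pi\in\Pi_{n,m,c}$ with $|I_1\cap B_{\mathrm{New}}^\pi|\ge2$, $|I_2\cap B_{\mathrm{Old}}^\pi|\ge1$, $|J_1\cap S_{\mathrm{New}}^\pi|\ge2$, and $|J_2\cap S_{\mathrm{Old}}^\pi|\ge1$. *)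

From HB Require Import structures.
From mathcomp Require Import all_boot all_order all_algebra.
From mathcomp Require Import all_classical all_reals all_analysis.

Set Implicit Arguments.
Unset Strict Implicit.
Unset Printing Implicit Defensive.

Import Order.TTheory GRing.Theory Num.Theory.
Local Open Scope classical_set_scope.
Local Open Scope ring_scope.

Definition quantile (R : realType) (F : probability R R) (q : R) : R :=
  inf [set x : R | (q%:E <= F [set` `]-oo, x]])%E].

Inductive label := BO | BN | SO | SN.

Definition label_code (l : label) : 'I_4 :=
  match l with BO => inord 0 | BN => inord 1 | SO => inord 2 | SN => inord 3 end.
Definition label_decode (i : 'I_4) : label :=
  match val i with 0 => BO | 1 => BN | 2 => SO | _ => SN end.
Lemma label_codeK : cancel label_code label_decode.
Proof. by case; rewrite /label_decode /= inordK. Qed.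
HB.instance Definition _ := Equality.copy label (can_type label_codeK).
HB.instance Definition _ := Choice.copy label (can_type label_codeK).
HB.instance Definition _ := Countable.copy label (can_type label_codeK).
HB.instance Definition _ := Finite.copy label (can_type label_codeK).

Definition Ntot (n m c : nat) : nat := (m + n + 2 * c)%N.

(* Agent indices 1..N are represented by ordinals 0..N-1 (index i <-> i-1). *)

Definition Pi_set (n m c : nat) : {set {ffun 'I_(Ntot n m c) -> label}} :=
  [set pi : {ffun 'I_(Ntot n m c) -> label} | [&& #|[set i | pi i == BO]| == m, #|[set i | pi i == SO]| == n,
               #|[set i | pi i == BN]| == c & #|[set i | pi i == SN]| == c]].

Definition pp (n : nat) : nat := (n %/ 10 + (n %% 10 != 0))%N. (* ceil (n/10) *)

(* I_1 = {1..p}, I_2 = {p+1..2p}, J_1 = {N-p+1..N}, J_2 = {N-2p+1..N-p},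
   written for 0-based ordinals. *)
Definition I1 (N p : nat) : {set 'I_N} := [set i : 'I_N | (i < p)%N].
Definition I2 (N p : nat) : {set 'I_N} := [set i : 'I_N | (p <= i < 2 * p)%N].
Definition J1 (N p : nat) : {set 'I_N} := [set i : 'I_N | (N - p <= i)%N].
Definition J2 (N p : nat) : {set 'I_N} := [set i : 'I_N | (N - 2 * p <= i < N - p)%N].

Definition E1_set (n m c : nat) : {set {ffun 'I_(Ntot n m c) -> label}} :=
  let N := Ntot n m c in let p := pp n in
  [set pi : {ffun 'I_(Ntot n m c) -> label} | (pi \in Pi_set n m c) &&
    [&& (2 <= #|I1 N p :&: [set i | pi i == BN]|)%N,
        (1 <= #|I2 N p :&: [set i | pi i == BO]|)%N,
        (2 <= #|J1 N p :&: [set i | pi i == SN]|)%N &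
        (1 <= #|J2 N p :&: [set i | pi i == SO]|)%N]].

Section Market.
Variable R : realType.

Definition sort_desc (s : seq R) : seq R := sort (fun x y => y <= x) s.
Definition sort_asc (s : seq R) : seq R := sort (fun x y => x <= y) s.

(* 1-based order statistics *)
Definition bth (bs : seq R) (i : nat) : R := nth 0 (sort_desc bs) i.-1.
Definition sth (ss : seq R) (i : nat) : R := nth 0 (sort_asc ss) i.-1.

Definition fb_r (bs ss : seq R) : nat :=
  \max_(i < (minn (size bs) (size ss)).+1 | (0 < i)%N && (sth ss i <= bth bs i)) i.

Definition gains_k (bs ss : seq R) (k : nat) : R :=
  \sum_(1 <= i < k.+1) (bth bs i - sth ss i).

Definition first_best (bs ss : seq R) : R := gains_k bs ss (fb_r bs ss).

(* Seller Trade Reduction: with s^(k) = +oo for k > #sellers, trade r pairs if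
   b^(r) >= s^(r+1), otherwise only r-1 pairs (no trade if r = 0). *)
Definition str_gains (bs ss : seq R) : R :=
  let r := fb_r bs ss in
  if r == 0%N then 0
  else if ((r < size ss)%N && (sth ss r.+1 <= bth bs r))
       then gains_k bs ss r else gains_k bs ss r.-1.

Variables (N : nat) (b s : R -> R) (q : 'I_N -> R).

Definition values_of (v : R -> R) (P : pred 'I_N) : seq R :=
  [seq v (q i) | i <- enum 'I_N & P i].

Definition OPT (pi : {ffun 'I_N -> label}) : R :=
  first_best (values_of b (fun i => pi i == BO)) (values_of s (fun i => pi i == SO)).

Definition STR (pi : {ffun 'I_N -> label}) : R :=
  str_gains (values_of b (fun i => (pi i == BO) || (pi i == BN)))
            (values_of s (fun i => (pi i == SO) || (pi i == SN))).

End Market.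

(* Expectation of X under pi uniform on Pi, conditioned on the event E
   (= uniform average over E). *)
Definition cond_exp (R : realType) (T : finType) (E : {set T}) (X : T -> R) : R :=
  (\sum_(x in E) X x) / #|E|%:R.

(* OPT trades its r best old buyers against its r cheapest old sellers, and
   on E_1 there are two new buyers in the top block I_1 and two new sellers in
   the bottom block J_1. The marginal OPT buyer is worth at least every seller
   of J_1: otherwise all r OPT sellers, but fewer than r old buyers, would lie
   on the wrong side of that value; yet only old sellers inside J_1 (at most
   p - 2 of them) can be that cheap, while all old buyers outside J_1 (at least
   m - p + 2 >= p - 2 of them, as 2p <= n + 4) are that valuable. Dually, the
   marginal OPT seller costs at most every buyer of I_1. So the OPT pairs and
   these four new agents form r + 2 buyers and r + 2 sellers, each seller
   cheaper than each buyer: the augmented first best trades at least r + 2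
   pairs and STR at least r + 1. The r + 1 best augmented buyers are worth at
   least any new buyer x together with the r OPT buyers, and dually for
   sellers, whence STR >= OPT + b(q_x) - s(q_y) for every new buyer x and new
   seller y. Averaging over the new buyers of I_1 and new sellers of J_1, and
   then over E_1, which is invariant under swapping two agents of I_1 or two
   of J_1, turns these averages into plain averages over I_1 and J_1. *)

From HB Require Import structures.
From mathcomp Require Import all_boot all_order all_algebra.
From mathcomp Require Import all_classical all_reals all_analysis.
From mathcomp Require Import zify ring lra.
From mathcomp Require perm.

Set Implicit Arguments.
Unset Strict Implicit.
Unset Printing Implicit Defensive.

Import Order.TTheory GRing.Theory Num.Theory.
Local Open Scope ring_scope.

(* The identity of R as a random variable, so that the library's results on
   cumulative distribution functions apply to F itself. *)
Definition id_rv (R : realType) : R -> R := fun x => x.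
HB.instance Definition _ (R : realType) :=
  @isMeasurableFun.Build _ _ _ _ (@id_rv R) (@measurable_id _ _ setT).

Section QuantileMonotone.
Context {R : realType} (F : probability R R).
(* Same scope order as in the definition of [quantile], so that intervals
   are read identically. *)
Local Open Scope classical_set_scope.
Local Open Scope ring_scope.

Let cdf_id_rv r : cdf (@id_rv R : {RV F >-> R}) r = F [set` `]-oo, r]].
Proof. rewrite /cdf /distribution /pushforward; congr (F _). Qed.

Lemma quantile_set_nonempty y : y < 1 -> exists t, (y%:E <= F [set` `]-oo, t]])%E.
Proof.
move=> y1; have [M [_ HM]] :=
  cvg_cdfy1 (@id_rv R : {RV F >-> R}) (open_ereal_gt' (y1 : y%:E < 1)%E).
exists (M + 1); apply/ltW; have := HM (M + 1).
by rewrite ltrDl ltr01 /= cdf_id_rv => /(_ isT).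
Qed.

Lemma quantile_set_lbounded x : 0 < x ->
  has_lbound [set t : R | (x%:E <= F [set` `]-oo, t]])%E].
Proof.
move=> x0; have [M [_ HM]] :=
  cvg_cdfNy0 (@id_rv R : {RV F >-> R}) (open_ereal_lt' (x0 : 0 < x%:E)%E).
exists M => t /= xt; rewrite leNgt; apply/negP => /HM /=.
by rewrite cdf_id_rv ltNge xt.
Qed.

Lemma quantile_le x y : 0 < x -> x <= y -> y < 1 -> quantile F x <= quantile F y.
Proof.
move=> x0 xy y1; apply: lb_le_inf; first exact: quantile_set_nonempty.
move=> t /= yt; apply: ge_inf; first exact: quantile_set_lbounded.
by apply: le_trans yt; rewrite lee_fin.
Qed.

End QuantileMonotone.

Section OrderStatistics.
Variable R : realType.
Implicit Types (bs ss t : seq R) (v w : R).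

Lemma sort_asc_sorted ss : sorted <=%R (sort_asc ss).
Proof. exact/sort_sorted/le_total. Qed.

Lemma le_sth ss k v : (0 < k <= size ss)%N ->
  (sth ss k <= v) = (k <= count (<= v)%R ss)%N.
Proof.
case/andP=> k0 kss; set S := sort_asc ss.
have sS := sort_asc_sorted ss.
have szS : size S = size ss by rewrite size_sort.
have cS a : count a S = count a ss by apply/permP/permEl/perm_sort.
rewrite /sth -/S -cS.
apply/idP/idP => [Skv|kc].
  have: all (<= v) (take k S).
    apply/(all_nthP 0) => i; rewrite size_takel ?szS // => ik.
    rewrite nth_take //; apply: le_trans Skv.
    by apply: (le_sorted_leq_nth 0 sS); rewrite ?inE ?szS; lia.
  rewrite all_count => /eqP cnt; rewrite -[k](size_takel (_ : k <= size S)%N) ?szS //.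
  by rewrite -cnt -{2}(cat_take_drop k S) count_cat leq_addr.
have kc' : (k.-1 < count (<= v)%R S)%N by rewrite prednK.
have: nth 0 S k.-1 \in [seq x <- S | x <= v].
  by rewrite (sorted_filter_le _ sS) -(nth_take 0 kc') mem_nth ?size_takel ?count_size.
by rewrite mem_filter => /andP[].
Qed.

Lemma bthE bs k : bth bs k = - sth (map -%R bs) k.
Proof.
rewrite /sth /sort_asc -(map_sort (leT' := fun x y => y <= x)); last first.
  by move=> x y; rewrite lerN2.
rewrite /bth -/(sort_desc bs); case: (ltnP k.-1 (size (sort_desc bs))) => kB.
  by rewrite (nth_map 0) ?opprK.
by rewrite !nth_default ?size_map // oppr0.
Qed.

Lemma sthE ss k : sth ss k = - bth (map -%R ss) k.
Proof. by rewrite bthE opprK -map_comp (eq_map opprK) map_id. Qed.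

Lemma le_bth bs k v : (0 < k <= size bs)%N ->
  (v <= bth bs k) = (k <= count (>= v)%R bs)%N.
Proof.
move=> kbs; rewrite bthE lerNr le_sth ?size_map // count_map.
by congr (_ <= _)%N; apply: eq_count => x /=; rewrite lerN2.
Qed.

Lemma fb_r_le_size bs ss : (fb_r bs ss <= minn (size bs) (size ss))%N.
Proof. by apply/bigmax_leqP => i _; rewrite -ltnS. Qed.

Lemma fb_r_trade bs ss : (0 < fb_r bs ss)%N ->
  sth ss (fb_r bs ss) <= bth bs (fb_r bs ss).
Proof.
rewrite /fb_r lt0n; elim/big_ind: _ => [//|x y|i /andP[_ //]].
by rewrite /maxn; case: ltnP.
Qed.

Lemma fb_r_ge bs ss k : (0 < k <= minn (size bs) (size ss))%N ->
  sth ss k <= bth bs k -> (k <= fb_r bs ss)%N.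
Proof.
case/andP=> k0 kmin tr; have kB : (k < (minn (size bs) (size ss)).+1)%N by rewrite ltnS.
by apply: (@leq_bigmax_cond _ _ (fun i : 'I__ => nat_of_ord i) (Ordinal kB)); rewrite /= k0.
Qed.

Lemma fb_r_ge_count bs ss k v w : (0 < k)%N ->
  (k <= count (>= v)%R bs)%N -> (k <= count (<= w)%R ss)%N -> w <= v ->
  (k <= fb_r bs ss)%N.
Proof.
move=> k0 kb ks wv.
have kbs := leq_trans kb (count_size _ _); have kss := leq_trans ks (count_size _ _).
apply: fb_r_ge; first by rewrite k0 leq_min kbs kss.
by apply: le_trans (le_trans wv _); [rewrite le_sth ?k0 | rewrite le_bth ?k0].
Qed.

Lemma fb_r_prefix bs ss i : (0 < i <= fb_r bs ss)%N -> sth ss i <= bth bs i.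
Proof.
case/andP=> i0 ir; set r := fb_r bs ss in ir.
have r0 : (0 < r)%N := leq_trans i0 ir.
have := fb_r_le_size bs ss; rewrite leq_min -/r => /andP[rb rs].
have sir : sth ss i <= sth ss r.
  rewrite le_sth ?i0 ?(leq_trans ir rs) //; apply: leq_trans ir _.
  by rewrite -le_sth ?r0.
have bri : bth bs r <= bth bs i.
  rewrite le_bth ?i0 ?(leq_trans ir rb) //; apply: leq_trans ir _.
  by rewrite -le_bth ?r0.
exact: le_trans sir (le_trans (fb_r_trade r0) bri).
Qed.

Lemma gains_kE bs ss k :
  gains_k bs ss k = \sum_(i < k) bth bs i.+1 - \sum_(i < k) sth ss i.+1.
Proof. by rewrite /gains_k big_add1 /= big_mkord sumrB. Qed.

Lemma gains_k_mono bs ss k k' : (k <= k' <= fb_r bs ss)%N ->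
  gains_k bs ss k <= gains_k bs ss k'.
Proof.
case/andP=> kk kr; rewrite /gains_k [leRHS](@big_cat_nat _ _ _ k.+1) //= lerDl.
rewrite big_nat_cond; apply: sumr_ge0 => i /andP[/andP[ki ik] _].
by rewrite subr_ge0 fb_r_prefix // (leq_trans _ ki) //= -ltnS (leq_trans ik).
Qed.

Lemma gains_le_str_gains bs ss k : (k.+2 <= fb_r bs ss)%N ->
  gains_k bs ss k.+1 <= str_gains bs ss.
Proof.
rewrite /str_gains; set r := fb_r bs ss => kr.
have -> : (r == 0%N) = false by apply/negbTE; rewrite -lt0n (leq_trans _ kr).
have le_pred : gains_k bs ss k.+1 <= gains_k bs ss r.-1.
  by apply: gains_k_mono; rewrite leq_pred andbT -ltnS prednK // (leq_trans _ kr).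
have le_r : gains_k bs ss r.-1 <= gains_k bs ss r.
  by apply: gains_k_mono; rewrite leq_pred /=.
by case: ifP => _ //; apply: le_trans le_pred le_r.
Qed.

Lemma sum_take (s : seq R) k : (k <= size s)%N ->
  \sum_(x <- take k s) x = \sum_(i < k) nth 0 s i.
Proof.
move=> ks; rewrite (big_nth 0) size_takel // big_mkord.
by apply: eq_bigr => i _; rewrite nth_take.
Qed.

Lemma sum_le_sum_bth bs t :
  (forall v, count (>= v)%R t <= count (>= v)%R bs)%N ->
  \sum_(x <- t) x <= \sum_(i < size t) bth bs i.+1.
Proof.
move=> dom; rewrite -(perm_big _ (permEl (perm_sort (fun x y => y <= x) t))).
rewrite (big_nth 0) big_mkord size_sort; apply: ler_sum => i _.
have it : (0 < i.+1 <= size t)%N by rewrite ltn_ord.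
have ct : (i.+1 <= count (>= bth t i.+1)%R t)%N by rewrite -le_bth.
have cb := leq_trans ct (dom _).
by rewrite le_bth ?cb // (leq_trans cb (count_size _ _)).
Qed.

Lemma sum_sth_le_sum ss t :
  (forall v, count (<= v)%R t <= count (<= v)%R ss)%N ->
  \sum_(i < size t) sth ss i.+1 <= \sum_(x <- t) x.
Proof.
move=> dom; under eq_bigr do rewrite sthE.
rewrite sumrN lerNl -sumrN.
have -> : \sum_(x <- t) - x = \sum_(x <- map -%R t) x by rewrite big_map.
rewrite -(size_map -%R t); apply: sum_le_sum_bth => v.
have cN s : count (>= v)%R (map -%R s) = count (<= - v)%R s.
  by rewrite count_map; apply: eq_count => x /=; rewrite lerNr.
by rewrite !cN.
Qed.

Lemma fb_r_bth_ge bs ss w : (0 < fb_r bs ss)%N ->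
  (count (< w)%R ss <= count (>= w)%R bs)%N -> w <= bth bs (fb_r bs ss).
Proof.
set r := fb_r bs ss => r0 cnt.
have := fb_r_le_size bs ss; rewrite leq_min -/r => /andP[rb rs].
have [//|bw] := leP w (bth bs r).
have : (r <= count (< w)%R ss)%N.
  have rc : (r <= count (<= sth ss r)%R ss)%N by rewrite -le_sth ?r0.
  apply: leq_trans rc (sub_count _ _) => x /= xs.
  exact: le_lt_trans xs (le_lt_trans (fb_r_trade r0) bw).
move/leq_trans/(_ cnt); rewrite -le_bth ?r0 // => /(lt_le_trans bw).
by rewrite ltxx.
Qed.

Lemma fb_r_sth_le bs ss w : (0 < fb_r bs ss)%N ->
  (count (> w)%R bs <= count (<= w)%R ss)%N -> sth ss (fb_r bs ss) <= w.
Proof.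
set r := fb_r bs ss => r0 cnt.
have := fb_r_le_size bs ss; rewrite leq_min -/r => /andP[rb rs].
have [sw|//] := ltP w (sth ss r).
have : (r <= count (> w)%R bs)%N.
  have rc : (r <= count (>= bth bs r)%R bs)%N by rewrite -le_bth ?r0.
  apply: leq_trans rc (sub_count _ _) => x /= xb.
  exact: lt_le_trans (lt_le_trans sw (fb_r_trade r0)) xb.
move/leq_trans/(_ cnt); rewrite -le_sth ?r0 // => /(lt_le_trans sw).
by rewrite ltxx.
Qed.

Lemma fb_r_add_traders bs ss nb ns bs' ss' v w :
  perm_eq bs' (bs ++ nb) -> perm_eq ss' (ss ++ ns) -> w <= v ->
  ((0 < fb_r bs ss)%N -> w <= bth bs (fb_r bs ss)) ->
  ((0 < fb_r bs ss)%N -> sth ss (fb_r bs ss) <= v) ->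
  (2 <= count (>= v)%R nb)%N -> (2 <= count (<= w)%R ns)%N ->
  ((fb_r bs ss).+2 <= fb_r bs' ss')%N.
Proof.
move=> pb ps wv wb sv nb2 ns2; set r := fb_r bs ss in wb sv *.
have cb' a : count a bs' = (count a bs + count a nb)%N by rewrite (permP pb) count_cat.
have cs' a : count a ss' = (count a ss + count a ns)%N by rewrite (permP ps) count_cat.
have [r0|r0] := posnP r.
  rewrite r0; apply: (fb_r_ge_count (v := v) (w := w)) => //.
    by rewrite cb' (leq_trans nb2) ?leq_addl.
  by rewrite cs' (leq_trans ns2) ?leq_addl.
have := fb_r_le_size bs ss; rewrite leq_min -/r => /andP[rb rs].
apply: (fb_r_ge_count (v := Num.min v (bth bs r)) (w := Num.max w (sth ss r))) => //.
- rewrite cb' -addn2; apply: leq_add.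
    have rc : (r <= count (>= bth bs r)%R bs)%N by rewrite -le_bth ?r0.
    by apply: leq_trans rc (sub_count _ _) => x /= bx; rewrite ge_min bx orbT.
  by apply: leq_trans nb2 (sub_count _ _) => x /= vx; rewrite ge_min vx.
- rewrite cs' -addn2; apply: leq_add.
    have rc : (r <= count (<= sth ss r)%R ss)%N by rewrite -le_sth ?r0.
    by apply: leq_trans rc (sub_count _ _) => x /= xs; rewrite le_max xs orbT.
  by apply: leq_trans ns2 (sub_count _ _) => x /= xw; rewrite le_max xw.
- by rewrite ge_max !le_min wv wb // sv // fb_r_trade.
Qed.

Lemma first_best_add_le_str_gains bs ss nb ns bs' ss' v w bx sy :
  perm_eq bs' (bs ++ nb) -> perm_eq ss' (ss ++ ns) -> w <= v ->
  ((0 < fb_r bs ss)%N -> w <= bth bs (fb_r bs ss)) ->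
  ((0 < fb_r bs ss)%N -> sth ss (fb_r bs ss) <= v) ->
  (2 <= count (>= v)%R nb)%N -> (2 <= count (<= w)%R ns)%N ->
  bx \in nb -> sy \in ns ->
  first_best bs ss + (bx - sy) <= str_gains bs' ss'.
Proof.
move=> pb ps wv wb sv nb2 ns2 bxn syn; set r := fb_r bs ss.
have r2 := fb_r_add_traders pb ps wv wb sv nb2 ns2.
apply: le_trans (gains_le_str_gains r2); rewrite /first_best !gains_kE -/r.
have := fb_r_le_size bs ss; rewrite leq_min -/r => /andP[rb rs].
have count_take a (s : seq R) : (count a (take r s) <= count a s)%N.
  by rewrite -{2}(cat_take_drop r s) count_cat leq_addr.
have count1 (a : pred R) x (s : seq R) : x \in s -> (count a [:: x] <= count a s)%N.
  rewrite /= addn0; case: (boolP (a x)) => // ax xs.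
  by rewrite -has_count; apply/hasP; exists x.
have top : bx + \sum_(i < r) bth bs i.+1 <= \sum_(i < r.+1) bth bs' i.+1.
  have := @sum_le_sum_bth bs' (bx :: take r (sort_desc bs)).
  rewrite big_cons sum_take ?size_sort // [size _]/= size_takel ?size_sort //; apply => u.
  rewrite -cat1s count_cat (permP pb) count_cat addnC leq_add ?count1 //.
  by rewrite (leq_trans (count_take _ _)) // (permP (permEl (perm_sort _ bs))).
have bot : \sum_(i < r.+1) sth ss' i.+1 <= sy + \sum_(i < r) sth ss i.+1.
  have := @sum_sth_le_sum ss' (sy :: take r (sort_asc ss)).
  rewrite big_cons sum_take ?size_sort // [size _]/= size_takel ?size_sort //; apply => u.
  rewrite -cat1s count_cat (permP ps) count_cat addnC leq_add ?count1 //.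
  by rewrite (leq_trans (count_take _ _)) // (permP (permEl (perm_sort _ ss))).
lra.
Qed.

End OrderStatistics.

Section Agents.
Variables (R : realType) (N : nat) (q : 'I_N -> R).
Implicit Types (v : R -> R) (P Q : pred 'I_N).

Lemma count_values_of v P (a : pred R) :
  count a (values_of q v P) = #|[set i | P i & a (v (q i))]|.
Proof.
rewrite /values_of count_map count_filter -sum1_count big_enum_cond -sum1_card.
by apply: eq_bigl => i; rewrite /= !inE andbC.
Qed.

Lemma perm_values_ofU v P Q : (forall i, P i -> ~~ Q i) ->
  perm_eq (values_of q v (fun i => P i || Q i)) (values_of q v P ++ values_of q v Q).
Proof.
move=> PQ; apply/permP => a; rewrite count_cat !count_values_of.
set A := [set i | P i & _]; set B := [set i | Q i & _].
have : [disjoint A & B].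
  rewrite disjoint_subset; apply/fintype.subsetP => i.
  by rewrite !inE => /andP[/PQ/negbTE ->].
rewrite -(leq_card_setU A B).2 => /eqP <-.
by apply: eq_card => i; rewrite !inE andb_orl.
Qed.

Lemma mem_values_of v P i : P i -> v (q i) \in values_of q v P.
Proof. by move=> Pi; apply: map_f; rewrite mem_filter Pi mem_enum. Qed.

Variables (b s : R -> R).
Hypothesis b_anti : forall i j : 'I_N, (i <= j)%N -> b (q j) <= b (q i).
Hypothesis s_anti : forall i j : 'I_N, (i <= j)%N -> s (q j) <= s (q i).
Hypothesis s_le_b : forall i, s (q i) <= b (q i).

Lemma marginal_buyer_ge PB PS (t : 'I_N) :
  (0 < fb_r (values_of q b PB) (values_of q s PS))%N ->
  (#|[set j | PS j & (t < j)%N]| <= #|[set i | PB i & (i <= t)%N]|)%N ->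
  s (q t) <= bth (values_of q b PB) (fb_r (values_of q b PB) (values_of q s PS)).
Proof.
move=> r0 cnt; apply: fb_r_bth_ge r0 _; rewrite !count_values_of.
have below : [set j | PS j & s (q j) < s (q t)] \subset [set j | PS j & (t < j)%N].
  apply/fintype.subsetP => j; rewrite !inE => /andP[-> /= sjt].
  by rewrite ltnNge; apply: contraL sjt => /s_anti; rewrite leNgt.
have above : [set i | PB i & (i <= t)%N] \subset [set i | PB i & s (q t) <= b (q i)].
  apply/fintype.subsetP => i; rewrite !inE => /andP[-> /= it].
  exact: le_trans (s_anti it) (s_le_b i).
exact: leq_trans (subset_leq_card below) (leq_trans cnt (subset_leq_card above)).
Qed.

Lemma marginal_seller_le PB PS (t : 'I_N) :
  (0 < fb_r (values_of q b PB) (values_of q s PS))%N ->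
  (#|[set i | PB i & (i < t)%N]| <= #|[set j | PS j & (t <= j)%N]|)%N ->
  sth (values_of q s PS) (fb_r (values_of q b PB) (values_of q s PS)) <= b (q t).
Proof.
move=> r0 cnt; apply: fb_r_sth_le r0 _; rewrite !count_values_of.
have above : [set i | PB i & b (q t) < b (q i)] \subset [set i | PB i & (i < t)%N].
  apply/fintype.subsetP => i; rewrite !inE => /andP[-> /= bti].
  by rewrite ltnNge; apply: contraL bti => /b_anti; rewrite leNgt.
have below : [set j | PS j & (t <= j)%N] \subset [set j | PS j & s (q j) <= b (q t)].
  apply/fintype.subsetP => j; rewrite !inE => /andP[-> /= tj].
  exact: le_trans (s_anti tj) (s_le_b t).
exact: leq_trans (subset_leq_card above) (leq_trans cnt (subset_leq_card below)).
Qed.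

Lemma opt_add_gain_le_str (pi : {ffun 'I_N -> label}) (ta tb x y : 'I_N) :
  (ta <= tb)%N ->
  (#|[set j | pi j == SO & (tb < j)%N]| <= #|[set i | pi i == BO & (i <= tb)%N]|)%N ->
  (#|[set i | pi i == BO & (i < ta)%N]| <= #|[set j | pi j == SO & (ta <= j)%N]|)%N ->
  (2 <= #|[set i | pi i == BN & (i <= ta)%N]|)%N ->
  (2 <= #|[set j | pi j == SN & (tb <= j)%N]|)%N ->
  pi x = BN -> pi y = SN ->
  OPT b s q pi + (b (q x) - s (q y)) <= STR b s q pi.
Proof.
move=> tab hB hS nb2 ns2 px py.
apply: (first_best_add_le_str_gains (nb := values_of q b (fun i => pi i == BN))
  (ns := values_of q s (fun i => pi i == SN)) (v := b (q ta)) (w := s (q tb))).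
- by apply: (@perm_values_ofU _ (fun i => pi i == BO)) => i /eqP ->; apply/eqP.
- by apply: (@perm_values_ofU _ (fun i => pi i == SO)) => i /eqP ->; apply/eqP.
- exact: le_trans (s_anti tab) (s_le_b ta).
- by move=> r0; apply: marginal_buyer_ge.
- by move=> r0; apply: marginal_seller_le.
- rewrite count_values_of; apply: leq_trans nb2 (subset_leq_card _).
  by apply/fintype.subsetP => i; rewrite !inE => /andP[-> /b_anti].
- rewrite count_values_of; apply: leq_trans ns2 (subset_leq_card _).
  by apply/fintype.subsetP => j; rewrite !inE => /andP[-> /s_anti].
- by apply: mem_values_of; rewrite px.
- by apply: mem_values_of; rewrite py.
Qed.

End Agents.

Section ConditionalExpectation.
Variables (R : realType) (T : finType).
Implicit Types (A B E : {set T}) (f g : T -> R).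

Lemma cond_exp_le_const A f c : (0 < #|A|)%N ->
  (forall a, a \in A -> f a <= c) -> cond_exp A f <= c.
Proof.
move=> A0 fc; rewrite /cond_exp ler_pdivrMr ?ltr0n // mulr_natr -sumr_const.
exact: ler_sum.
Qed.

Lemma cond_exp_ge_const A f c : (0 < #|A|)%N ->
  (forall a, a \in A -> c <= f a) -> c <= cond_exp A f.
Proof.
move=> A0 fc; rewrite /cond_exp ler_pdivlMr ?ltr0n // mulr_natr -sumr_const.
exact: ler_sum.
Qed.

Lemma cond_exp_sub_le A B f g d : (0 < #|A|)%N -> (0 < #|B|)%N ->
  (forall a b, a \in A -> b \in B -> f a - g b <= d) ->
  cond_exp A f - cond_exp B g <= d.
Proof.
move=> A0 B0 fgd; rewrite lerBlDr; apply: cond_exp_le_const => // a aA.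
rewrite -lerBlDl; apply: cond_exp_ge_const => // b bB.
by rewrite lerBlDr addrC -lerBlDr; apply: fgd.
Qed.

Lemma ler_cond_exp E f g : (forall x, x \in E -> f x <= g x) ->
  cond_exp E f <= cond_exp E g.
Proof. by move=> fg; rewrite /cond_exp ler_wpM2r ?invr_ge0 ?ler0n // ler_sum. Qed.

Lemma cond_expB E f g :
  cond_exp E (fun x => f x - g x) = cond_exp E f - cond_exp E g.
Proof. by rewrite /cond_exp sumrB mulrBl. Qed.

Lemma cond_exp_pairs A B f g : (0 < #|A|)%N -> (0 < #|B|)%N ->
  (\sum_(a in A) \sum_(b in B) (f a - g b)) / (#|A| * #|B|)%:R =
  cond_exp A f - cond_exp B g.
Proof.
move=> A0 B0; under eq_bigr do rewrite sumrB sumr_const.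
rewrite sumrB sumr_const sumrMnl /cond_exp natrM.
by field; rewrite !pnatr_eq0 -!lt0n A0 B0.
Qed.

End ConditionalExpectation.

Section Symmetrization.
Import perm.
Variables (R : realType) (T S : finType).
Implicit Types (pi : {ffun T -> S}) (Z : {set T}) (l : S).

Definition swap_agents (i i' : T) pi : {ffun T -> S} := [ffun j => pi (tperm i i' j)].

Lemma swap_agentsK i i' : involutive (swap_agents i i').
Proof. by move=> pi; apply/ffunP => j; rewrite !ffunE tpermK. Qed.

Lemma card_swap_agents Z i i' pi l : (i \in Z) = (i' \in Z) ->
  #|Z :&: [set j | swap_agents i i' pi j == l]| = #|Z :&: [set j | pi j == l]|.
Proof.
move=> ii'; rewrite -(card_preimset _ (@perm_inj _ (tperm i i'))).
apply: eq_card => j; rewrite !inE ffunE tpermK; congr (_ && _).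
by case: tpermP => [->|->|] //; rewrite ii'.
Qed.

Lemma cond_exp_symmetrize (E : {set {ffun T -> S}}) Z l (f : T -> R) :
  (0 < #|E|)%N ->
  (forall pi, pi \in E -> 0 < #|Z :&: [set j | pi j == l]|)%N ->
  (forall i i' pi, i \in Z -> i' \in Z -> (swap_agents i i' pi \in E) = (pi \in E)) ->
  cond_exp E (fun pi => cond_exp (Z :&: [set j | pi j == l]) f) = cond_exp Z f.
Proof.
move=> E0 k0 Einv.
pose k pi := #|Z :&: [set j | pi j == l]|.
pose w pi j : R := (pi j == l)%:R / (k pi)%:R.
have cond_expE pi : cond_exp (Z :&: [set j | pi j == l]) f = \sum_(j in Z) w pi j * f j.
  rewrite /cond_exp mulr_suml [LHS]big_mkcond [RHS]big_mkcond; apply: eq_bigr => j _.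
  by rewrite !inE /w; case: (j \in Z); case: (pi j == l); rewrite ?mul1r ?mul0r // mulrC.
have w1 pi : pi \in E -> \sum_(j in Z) w pi j = 1.
  move=> piE; rewrite -mulr_suml -natr_sum.
  have -> : (\sum_(j in Z) (pi j == l))%N = k pi.
    rewrite /k -sum1_card [LHS]big_mkcond [RHS]big_mkcond; apply: eq_bigr => j _.
    by rewrite !inE; case: (j \in Z); case: (pi j == l).
  by rewrite divff // pnatr_eq0 -lt0n k0.
pose W j := \sum_(pi in E) w pi j.
(* Swap invariance of E gives every agent of Z the same total weight. *)
have W_swap j j' : j \in Z -> j' \in Z -> W j = W j'.
  move=> jZ j'Z; rewrite /W (reindex_inj (inv_inj (swap_agentsK j j'))) /=.
  apply: eq_big => [pi|pi _]; first by rewrite Einv.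
  by rewrite /w /k card_swap_agents ?jZ ?j'Z // ffunE tpermL.
have /card_gt0P[pi0 pi0E] := E0; have /card_gt0P[j0 /setIP[j0Z _]] := k0 _ pi0E.
have WE : W j0 = #|E|%:R / #|Z|%:R.
  have : \sum_(j in Z) W j = #|E|%:R.
    by rewrite exchange_big /= -sum1_card natr_sum; apply: eq_bigr => pi /w1.
  rewrite (eq_bigr (fun=> W j0)) => [|j jZ]; last exact: W_swap.
  rewrite sumr_const => <-; rewrite -[W j0 *+ _]mulr_natr mulfK // pnatr_eq0 -lt0n.
  by apply/card_gt0P; exists j0.
have sumE :
    \sum_(pi in E) cond_exp (Z :&: [set j | pi j == l]) f = W j0 * \sum_(j in Z) f j.
  under eq_bigr do rewrite cond_expE.
  rewrite exchange_big mulr_sumr /=; apply: eq_bigr => j jZ.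
  by rewrite -mulr_suml -/(W j) (W_swap j j0 jZ j0Z).
rewrite {1}/cond_exp sumE WE /cond_exp; field.
by rewrite !pnatr_eq0 -!lt0n E0 andbT; apply/card_gt0P; exists j0.
Qed.

End Symmetrization.

Lemma pp_bounds n : (20 <= n)%N -> (2 <= pp n)%N /\ (2 * pp n <= n + 4)%N.
Proof.
move=> n20; have := divn_eq n 10; have := ltn_pmod n (isT : 0 < 10)%N.
by rewrite /pp; case: eqP => /= _; lia.
Qed.

Lemma card_I1 N p : (p <= N)%N -> #|I1 N p| = p.
Proof.
move=> pN; rewrite -sum1_card (eq_bigl (fun i : 'I_N => (i < p)%N)) => [|i].
  by rewrite (big_ord_narrow pN) sum1_card card_ord.
by rewrite inE.
Qed.

Lemma card_J1 N p : (p <= N)%N -> #|J1 N p| = p.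
Proof.
move=> pN; rewrite -[RHS](card_I1 pN) -[RHS](card_preimset _ (@rev_ord_inj N)).
by apply: eq_card => i; rewrite !inE /=; have := ltn_ord i; lia.
Qed.

Lemma card_classical_set (T : finType) (P : pred T) :
  #|[set x | P x]%classic| = #|[set x | P x]|.
Proof. by apply: eq_card => x; rewrite inE; apply/idP/idP => [/set_mem|/mem_set]. Qed.

Lemma card_two_labels (T : finType) (Z : {set T}) (pi : {ffun T -> label}) l l' :
  l != l' ->
  (#|Z :&: [set i | pi i == l]| + #|Z :&: [set i | pi i == l']| <= #|Z|)%N.
Proof.
move=> ll'; set A := Z :&: _; set B := Z :&: _.
have : [disjoint A & B].
  rewrite disjoint_subset; apply/fintype.subsetP => i; rewrite !inE => /andP[_ /eqP ->].
  by rewrite negb_and ll' orbT.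
rewrite -(leq_card_setU A B).2 => /eqP <-; apply: subset_leq_card.
by apply/fintype.subsetP => i; rewrite !inE -andb_orr => /andP[].
Qed.

Section FirstEvent.
Variables (R : realType) (b s : R -> R) (n m c : nat).
Local Notation N := (Ntot n m c).
Local Notation p := (pp n).
Variable q : 'I_N -> R.
Hypothesis b_anti : forall i j : 'I_N, (i <= j)%N -> b (q j) <= b (q i).
Hypothesis s_anti : forall i j : 'I_N, (i <= j)%N -> s (q j) <= s (q i).
Hypothesis s_le_b : forall i, s (q i) <= b (q i).
Hypotheses (n20 : (20 <= n)%N) (nm : (n <= m)%N).

Let p2 : (2 <= p)%N := (pp_bounds n20).1.
Let pn : (2 * p <= n + 4)%N := (pp_bounds n20).2.
Let p1_lt : (p.-1 < N)%N. Proof. rewrite /Ntot; lia. Qed.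
Let Np_lt : (N - p < N)%N. Proof. rewrite /Ntot; lia. Qed.
Let pN : (p <= N)%N. Proof. rewrite /Ntot; lia. Qed.
Let ta : 'I_N := Ordinal p1_lt.
Let tb : 'I_N := Ordinal Np_lt.

Let le_ta i : (i <= ta)%N = (i < p)%N.
Proof. by rewrite /= -ltnS prednK // (ltnW p2). Qed.

Lemma E1_setP (pi : {ffun 'I_N -> label}) : pi \in E1_set n m c ->
  [/\ #|[set i | pi i == BO]| = m, #|[set j | pi j == SO]| = n,
      (2 <= #|I1 N p :&: [set i | pi i == BN]|)%N &
      (2 <= #|J1 N p :&: [set j | pi j == SN]|)%N].
Proof.
rewrite !inE !card_classical_set.
by case/andP=> /and4P[/eqP -> /eqP -> _ _] /and4P[-> _ -> _].
Qed.

Lemma E1_gain (pi : {ffun 'I_N -> label}) x y :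
  pi \in E1_set n m c -> pi x = BN -> pi y = SN ->
  b (q x) - s (q y) <= STR b s q pi - OPT b s q pi.
Proof.
case/E1_setP=> cBO cSO nb2 ns2 px py; rewrite lerBrDl.
have blockI l : l <> BN -> (#|I1 N p :&: [set i | pi i == l]| + 2 <= p)%N.
  move=> /eqP lBN; rewrite -[p in (_ <= p)%N](card_I1 pN).
  by apply: leq_trans (card_two_labels _ pi lBN); rewrite leq_add2l.
have blockJ l : l <> SN -> (#|J1 N p :&: [set i | pi i == l]| + 2 <= p)%N.
  move=> /eqP lSN; rewrite -[p in (_ <= p)%N](card_J1 pN).
  by apply: leq_trans (card_two_labels _ pi lSN); rewrite leq_add2l.
have outside (Z : {set 'I_N}) (l : label) :
    (#|[set i | pi i == l] :\: Z| + #|Z :&: [set i | pi i == l]|)%N =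
    #|[set i | pi i == l]|.
  by rewrite finset.setIC addnC cardsID.
apply: (@opt_add_gain_le_str _ _ _ _ _ b_anti s_anti s_le_b _ ta tb) => //.
- rewrite /= /Ntot; lia.
- have sub1 :
      (#|[set j | pi j == SO & (tb < j)%N]| <= #|J1 N p :&: [set i | pi i == SO]|)%N.
    by apply/subset_leq_card/fintype.subsetP => j; rewrite !inE => /andP[-> /ltnW ->].
  have sub2 :
      (#|[set i | pi i == BO] :\: J1 N p| <= #|[set i | pi i == BO & (i <= tb)%N]|)%N.
    apply/subset_leq_card/fintype.subsetP => i; rewrite !inE -ltnNge => /andP[/ltnW ->].
    by move=> ->.
  apply: leq_trans sub1 (leq_trans _ sub2).
  have JSO : (#|J1 N p :&: [set i | pi i == SO]| + 2 <= p)%N by apply: blockJ.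
  have JBO : (#|J1 N p :&: [set i | pi i == BO]| + 2 <= p)%N by apply: blockJ.
  have := outside (J1 N p) BO; lia.
- have sub1 :
      (#|[set i | pi i == BO & (i < ta)%N]| <= #|I1 N p :&: [set i | pi i == BO]|)%N.
    apply/subset_leq_card/fintype.subsetP => i; rewrite !inE -le_ta.
    by case/andP=> -> /ltnW ->.
  have sub2 :
      (#|[set i | pi i == SO] :\: I1 N p| <= #|[set j | pi j == SO & (ta <= j)%N]|)%N.
    apply/subset_leq_card/fintype.subsetP => j; rewrite !inE -le_ta -ltnNge.
    by case/andP=> /ltnW -> ->.
  apply: leq_trans sub1 (leq_trans _ sub2).
  have IBO : (#|I1 N p :&: [set i | pi i == BO]| + 2 <= p)%N by apply: blockI.
  have ISO : (#|I1 N p :&: [set i | pi i == SO]| + 2 <= p)%N by apply: blockI.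
  have := outside (I1 N p) SO; lia.
- apply: leq_trans nb2 (eq_leq _); apply: eq_card => i.
  by rewrite !inE -le_ta andbC.
- apply: leq_trans ns2 (eq_leq _); apply: eq_card => j.
  by rewrite !inE andbC.
Qed.

Lemma E1_opt_le_str pi : pi \in E1_set n m c -> OPT b s q pi <= STR b s q pi.
Proof.
move=> piE; have [_ _ /ltnW/card_gt0P[x] /[!inE] /andP[xp /eqP px]
                     /ltnW/card_gt0P[y] /[!inE] /andP[yp /eqP py]] := E1_setP piE.
rewrite -subr_ge0; apply: le_trans (E1_gain piE px py); rewrite subr_ge0.
by apply: le_trans (s_le_b x); apply: s_anti; move: xp yp; rewrite /Ntot; lia.
Qed.

Lemma E1_swap i i' pi :
  ((i \in I1 N p) && (i' \in I1 N p)) || ((i \in J1 N p) && (i' \in J1 N p)) ->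
  (swap_agents i i' pi \in E1_set n m c) = (pi \in E1_set n m c).
Proof.
move=> ii'.
have same Z : Z \in [:: I1 N p; I2 N p; J1 N p; J2 N p] -> (i \in Z) = (i' \in Z).
  rewrite !inE => /or4P[] /eqP ->; move: ii'; rewrite !inE /= /Ntot;
    by case/orP=> /andP[hi hi']; apply/idP/idP; lia.
have all_agents l : #|[set j | swap_agents i i' pi j == l]| = #|[set j | pi j == l]|.
  by have := @card_swap_agents _ _ [set: 'I_N] i i' pi l; rewrite !finset.setTI !inE => ->.
rewrite !inE !card_classical_set !all_agents.
by rewrite !card_swap_agents ?same ?inE ?eqxx ?orbT.
Qed.

Lemma E1_cond_exp_ge : (0 < #|E1_set n m c|)%N ->
  cond_exp (I1 N p) (fun i => b (q i)) - cond_exp (J1 N p) (fun j => s (q j)) <=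
  cond_exp (E1_set n m c) (fun pi => STR b s q pi - OPT b s q pi).
Proof.
move=> E0.
have new_traders pi : pi \in E1_set n m c ->
    (0 < #|I1 N p :&: [set i | pi i == BN]|)%N /\
    (0 < #|J1 N p :&: [set j | pi j == SN]|)%N.
  by case/E1_setP=> _ _ /ltnW nb /ltnW ns.
rewrite -(cond_exp_symmetrize (l := BN) _ E0) => [||i i' pi iI i'I]; first last.
- by rewrite E1_swap // iI i'I.
- by move=> pi /new_traders[].
rewrite -(cond_exp_symmetrize (l := SN) _ E0) => [||j j' pi jJ j'J]; first last.
- by rewrite E1_swap // jJ j'J orbT.
- by move=> pi /new_traders[].
rewrite -cond_expB; apply: ler_cond_exp => pi piE.
have [nb ns] := new_traders pi piE.
apply: cond_exp_sub_le => // x y; rewrite !inE => /andP[_ /eqP px] /andP[_ /eqP py].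
exact: E1_gain.
Qed.

End FirstEvent.

Theorem lemma3p1 (R : realType) (FB FS : probability R R)
  (Hdom : forall x : R, 0 < x < 1 -> quantile FS x <= quantile FB x)
  (n m c : nat) (Hn : (20 <= n)%N) (Hmn : (n <= m)%N) (Hc : (1 <= c)%N)
  (q : 'I_(Ntot n m c) -> R)
  (Hq01 : forall i, 0 < q i < 1)
  (Hqmono : forall i j : 'I_(Ntot n m c), (i <= j)%N -> q j <= q i) :
  (forall pi, pi \in E1_set n m c ->
     OPT (quantile FB) (quantile FS) q pi <= STR (quantile FB) (quantile FS) q pi)
  /\
  ((0 < #|E1_set n m c|)%N ->
     cond_exp (E1_set n m c)
       (fun pi => STR (quantile FB) (quantile FS) q pi - OPT (quantile FB) (quantile FS) q pi)
     >= (\sum_(i in I1 (Ntot n m c) (pp n)) \sum_(j in J1 (Ntot n m c) (pp n))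
           (quantile FB (q i) - quantile FS (q j))) / ((pp n)%:R ^+ 2)).
Proof.
have anti (F : probability R R) (i j : 'I_(Ntot n m c)) :
    (i <= j)%N -> quantile F (q j) <= quantile F (q i).
  move=> ij; have /andP[qj0 _] := Hq01 j; have /andP[_ qi1] := Hq01 i.
  exact: quantile_le qj0 (Hqmono _ _ ij) qi1.
have s_le_b i : quantile FS (q i) <= quantile FB (q i) by apply: Hdom.
split=> [pi|E0]; first exact: (E1_opt_le_str (anti FB) (anti FS) s_le_b Hn Hmn).
have pN : (pp n <= Ntot n m c)%N by have := pp_bounds Hn; rewrite /Ntot; lia.
have -> : (pp n)%:R ^+ 2 = (#|I1 (Ntot n m c) (pp n)| * #|J1 (Ntot n m c) (pp n)|)%:R :> R.
  by rewrite card_I1 // card_J1 // natrM expr2.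
have p0 : (0 < pp n)%N by have := pp_bounds Hn; lia.
rewrite cond_exp_pairs ?card_I1 ?card_J1 //.
exact: (E1_cond_exp_ge (anti FB) (anti FS) s_le_b Hn Hmn).
Qed.
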